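(* Let $W=I_2(m)$, $m\ge3$. Writing $X^{(m)}_{\alpha\ldots}=\sum_{w\in W}q_w\delta_w$ with $q_w\in\mathcal{Q}$, the coefficient $c^{(m-3)}_{\beta,\alpha}$ of $\delta^{(m-3)}_{\beta\ldots}$ equals $$c^{(m-3)}_{\beta,\alpha}=\begin{cases}-\,y_\alpha\,\upsilon^{(3)}_\beta\big\{S^{(0,m-3)}_\beta(y_\alpha y_\beta)+s_\alpha(y_\alpha y_\beta)\big\},& m\text{ even},\\ \ \ \,y_\alpha\,\upsilon^{(3)}_\beta\big\{S^{(0,m-3)}_\beta(y_\alpha y_\beta)+s_\alpha(y_\alpha y_\beta)\big\},& m\text{ odd}.\end{cases}$$ Symmetrically, the coefficient $c^{(m-3)}_{\alpha,\beta}$ of $\delta^{(m-3)}_{\alpha\ldots}$ in $X^{(m)}_{\beta\ldots}$ is given by the same formula with $\alpha$ and $\beta$ interchanged.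
   Context: General setup: $W$ a finite real reflection group with root system $\Sigma$; $R$ an integral domain containing the ring $\mathcal{R}\subset\mathbb{R}$ generated by the coefficients of roots in the basis of simple roots; $F$ a one-dimensional commutative formal group law over $R$; $\mathcal{S}$ the formal root algebra (the quotient of the completed polynomial ring $R[[x_\lambda:\lambda\in\Lambda]]$, $\Lambda$ the lattice spanned by $\mathcal{R}$-multiples of roots, by the closed ideal generated by $x_0$ and the relations $x_{e_i\gamma+e_j\gamma'}=(e_ix_\gamma)+_F(e_jx_{\gamma'})$ for roots $\gamma,\gamma'$ and a fixed $\mathbb{Z}$-basis $(e_1=1,\dots,e_l)$ of $\mathcal{R}$), with $W$ acting by $w(x_\lambda)=x_{w(\lambda)}$; $\mathcal{Q}$ its localization at all $x_\gamma$; $\mathcal{Q}_W=\mathcal{Q}\otimes_RR[W]$ with left $\mathcal{Q}$-basis $\{\delta_w\}$ and product $(q\delta_w)(q'\delta_{w'})=q\,w(q')\delta_{ww'}$, $\mathbf 1=\delta_1$; $\delta_\gamma=\delta_{s_\gamma}$, $X_\gamma=\frac1{x_\gamma}(\mathbf 1-\delta_\gamma)$. Dihedral notation: $W=I_2(m)$, simple roots $\alpha,\beta$; $y_\gamma=1/x_\gamma\in\mathcal{Q}$; $W$ acts on products multiplicatively, $s(y_\gamma)=y_{s(\gamma)}$. $X^{(i)}_{\alpha\ldots}=X_\alpha X_\beta X_\alpha\cdots$ ($i$ alternating factors), $X^{(i)}_{\beta\ldots}$, $\delta^{(i)}_{\alpha\ldots}=\delta_\alpha\delta_\beta\cdots$,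 $\delta^{(i)}_{\beta\ldots}$, $s^{(i)}_{\alpha\ldots}=s_\alpha s_\beta\cdots$, $s^{(i)}_{\beta\ldots}$ ($i$ factors; $i=0$ gives $\mathbf 1$ / identity). $\omega_j=\alpha$ for $j$ even, $\omega_j=\beta$ for $j$ odd. For $0\le i\le m-1$: $\upsilon^{(i)}_\alpha=\prod_{j=0}^{m-i-1}s^{(j)}_{\alpha\ldots}(y_{\omega_j})$ and $\upsilon^{(i)}_\beta=\prod_{j=0}^{m-i-1}s^{(j)}_{\beta\ldots}(y_{\omega_{j+1}})$ (empty product $=1$). For $i\le j$: $S^{(i,j)}_\alpha(u)=\sum_{k=i}^js^{(k)}_{\alpha\ldots}(u)$, $S^{(i,j)}_\beta(u)=\sum_{k=i}^js^{(k)}_{\beta\ldots}(u)$; an empty range gives $0$. *)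

From HB Require Import structures.
From mathcomp Require Import all_boot all_order all_algebra all_fingroup.
Set Implicit Arguments. Unset Strict Implicit. Unset Printing Implicit Defensive.
Import GRing.Theory.
Local Open Scope ring_scope.

(* Roots are the 2m unit vectors at angles k*pi/m, k in Z/2m; we index the   *)
(* root at angle k*pi/m by k : 'Z_(2m).  The simple roots are               *)
(*   alpha = root 0   (angle 0),                                             *)
(*   beta  = root (m-1)  (angle pi - pi/m),                                  *)
(* so that the angle between alpha and beta is pi - pi/m.                    *)
(* The reflection s_gamma in the line orthogonal to the root of index a maps *)
(* the angle phi to 2 a pi/m + pi - phi, i.e. index r to 2a + m - r.         *)

Definition rootI2 (m : nat) := 'Z_(m.*2).

Definition ralpha (m : nat) : rootI2 m := 0.
Definition rbeta (m : nat) : rootI2 m := (m.-1)%:R.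

Definition refl_fun (m : nat) (a : rootI2 m) (r : rootI2 m) : rootI2 m :=
  a *+ 2 + m%:R - r.

Lemma refl_fun_inj (m : nat) (a : rootI2 m) : injective (refl_fun a).
Proof. by move=> r1 r2; rewrite /refl_fun => /addrI /oppr_inj. Qed.

Definition sref (m : nat) (a : rootI2 m) : {perm rootI2 m} := perm (@refl_fun_inj m a).

(* Composition of Weyl group elements in the paper's convention:           *)
(* wcomp u v = u o v  (first v, then u).  Note that mathcomp's product of   *)
(* permutations is (v * u) x = u (v x).                                      *)
Definition wcomp (m : nat) (u v : {perm rootI2 m}) : {perm rootI2 m} := (v * u)%g.

(* The Weyl group W = I_2(m), realised (faithfully) as the group of          *)
(* permutations of the roots generated by the simple reflections.            *)
Definition Wgrp (m : nat) : {set {perm rootI2 m}} :=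
  <<[set sref (ralpha m); sref (rbeta m)]>>%g.

Definition altw (T : Type) (a b : T) (i : nat) : seq T :=
  mkseq (fun j => if odd j then b else a) i.

(* s^{(i)}_{a...} = s_a s_b s_a ...  (i factors) *)
Definition sword (m : nat) (a b : rootI2 m) (i : nat) : {perm rootI2 m} :=
  foldr (@wcomp m) 1%g (map (@sref m) (altw a b i)).

(* The twisted group algebra Q_W = Q (x) R[W], elements sum_w q_w delta_w,   *)
(* represented by their coefficient functions (supported on W).             *)
(* (q delta_u)(q' delta_v) = q u(q') delta_{uv}.                            *)

Section TwistedGroupAlgebra.
Variables (m : nat) (Q : comUnitRingType)
          (act : {perm rootI2 m} -> {rmorphism Q -> Q}).

Definition QW := {ffun {perm rootI2 m} -> Q}.

Definition qw_delta (w : {perm rootI2 m}) : QW := [ffun u => (u == w)%:R].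

Definition qw_scale (q : Q) (A : QW) : QW := [ffun u => q * A u].

Definition qw_add (A B : QW) : QW := [ffun u => A u + B u].

Definition qw_opp (A : QW) : QW := [ffun u => - A u].

Definition qw_mul (A B : QW) : QW :=
  [ffun w => \sum_(u : {perm rootI2 m}) \sum_(v : {perm rootI2 m} | wcomp u v == w)
               A u * act u (B v)].

Definition qw_coef (A : QW) (w : {perm rootI2 m}) : Q := A w.

Variable x : rootI2 m -> Q.

Definition yr (k : rootI2 m) : Q := (x k)^-1.

Definition Xop (k : rootI2 m) : QW :=
  qw_scale (yr k) (qw_add (qw_delta 1%g) (qw_opp (qw_delta (sref k)))).

(* X^{(i)}_{a...} = X_a X_b X_a ...  (i factors) *)
Definition Xword (a b : rootI2 m) (i : nat) : QW :=
  foldr qw_mul (qw_delta 1%g) (map Xop (altw a b i)).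

(* upsilon^{(i)}: for (a,b) = (alpha,beta) this is
     upsilon^{(i)}_alpha = prod_{j=0}^{m-i-1} s^{(j)}_{alpha...}(y_{omega_j}),
   for (a,b) = (beta,alpha) it is
     upsilon^{(i)}_beta  = prod_{j=0}^{m-i-1} s^{(j)}_{beta...}(y_{omega_{j+1}}),
   where omega_j = alpha for j even, beta for j odd. *)
Definition ups (a b : rootI2 m) (i : nat) : Q :=
  \prod_(0 <= j < m - i) act (sword a b j) (yr (if odd j then b else a)).

(* S^{(i,j)}_a(u) = sum_{k=i}^{j} s^{(k)}_{a...}(u)  (empty if j < i) *)
Definition Ssum (a b : rootI2 m) (i j : nat) (u : Q) : Q :=
  \sum_(i <= k < j.+1) act (sword a b k) u.

End TwistedGroupAlgebra.

From HB Require Import structures.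
From mathcomp Require Import all_boot all_order all_algebra all_fingroup.
From mathcomp Require Import ring zify.
Set Implicit Arguments. Unset Strict Implicit. Unset Printing Implicit Defensive.
Import GRing.Theory.
Local Open Scope ring_scope.

(* Write X^{(n)}_{a..} = X_a X^{(n-1)}_{b..}.  Since X_a = y_a (1 - delta_a),
   the coefficients obey the recursion
     q^{(n)}_{a..}(w) = y_a (q^{(n-1)}_{b..}(w) - s_a(q^{(n-1)}_{b..}(s_a w))),
   and X^{(n)}_{a..} is supported on the alternating words of length <= n.
   The first part of the file shows that the words s^{(j)}_{a..}, s^{(j)}_{b..},
   j <= m, are distinct (except at lengths 0 and m), by computing their action
   on the 2m roots: they are the affine maps r |-> (-1)^j r + c_j of Z/2m.
   With the support bound this kills the terms of the recursion involving
   words that are too long, and an induction on n computes successively the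
   coefficient of the longest word (coef_top), and of the words one, two and
   three letters shorter (coef_next, coef_second, coef_third).  These
   computations only use abstract properties of a pair of simple roots
   (dihedral_pair), so (alpha, beta) and (beta, alpha) are treated at once;
   the theorem is coef_third for n = m - 3. *)

Lemma altwS (T : Type) (a b : T) n : altw a b n.+1 = a :: altw b a n.
Proof.
rewrite /altw /mkseq /= (_ : iota 1 n = map (addn 1) (iota 0 n)); last by rewrite -iotaDl.
by rewrite -map_comp; congr (_ :: _); apply: eq_map => j /=; case: (odd j).
Qed.

Section Words.
Variable m : nat.
Implicit Types (a b : rootI2 m) (w : {perm rootI2 m}).

Lemma swordS a b n : sword a b n.+1 = wcomp (sref a) (sword b a n).
Proof. by rewrite /sword altwS. Qed.

Lemma sref_invol a : wcomp (sref a) (sref a) = 1%g.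
Proof. by apply/permP => r; rewrite /wcomp permM !permE /refl_fun; ring. Qed.

Lemma srefK a w : wcomp (sref a) (wcomp (sref a) w) = w.
Proof. by rewrite /wcomp -mulgA; move: (sref_invol a); rewrite /wcomp => ->; rewrite mulg1. Qed.

Lemma sref_invg a : ((sref a)^-1 = sref a)%g.
Proof. by apply: (mulgI (sref a)); rewrite mulgV -(sref_invol a). Qed.

End Words.

Section RootIndices.
Variable m : nat.
Hypothesis m_gt1 : (1 < m)%N.

Let m2_gt1 : (1 < m.*2)%N. Proof. by rewrite -addnn; lia. Qed.

Lemma val_natZ n : val (n%:R : rootI2 m) = (n %% m.*2)%N.
Proof. exact: val_Zp_nat. Qed.

Lemma natZ_inj j k : (j <= m)%N -> (k <= m)%N -> j%:R = k%:R :> rootI2 m -> j = k.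
Proof.
move=> jm km /(congr1 val); rewrite !val_natZ !modn_small //; rewrite -addnn; lia.
Qed.

Lemma natZ_oppr_inj j k : (j <= m)%N -> (k <= m)%N -> j%:R = - k%:R :> rootI2 m ->
  j = k /\ (j = 0 \/ j = m)%N.
Proof.
move=> jm km /eqP; rewrite -subr_eq0 opprK -natrD => /eqP /(congr1 val).
rewrite val_natZ /=; have [E|ne] := eqVneq (j + k)%N m.*2.
  by move: E; rewrite -addnn; lia.
by rewrite modn_small; [lia | move: ne; rewrite -addnn; lia].
Qed.

Lemma two_neq0 : (2%:R : rootI2 m) != 0.
Proof.
by apply/eqP => /(congr1 val); rewrite val_natZ modn_small //= -addnn; lia.
Qed.

(* Since 2 is nonzero, a sign (-1)^j determines the parity of j. *)
Lemma sign_odd_inj j k : (-1) ^+ j = (-1) ^+ k :> rootI2 m -> odd j = odd k.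
Proof.
rewrite -(signr_odd _ j) -(signr_odd _ k).
have sign_ne : (-1 : rootI2 m) != 1.
  by apply: contraNneq two_neq0 => E; rewrite -[2%:R]/(1 + 1 : rootI2 m) -[X in X + _]E addNr.
case: (odd j); case: (odd k); rewrite /= ?expr0 ?expr1 // => /eqP.
  by rewrite (negbTE sign_ne).
by rewrite eq_sym (negbTE sign_ne).
Qed.

Lemma rbetaE : rbeta m = m%:R - 1.
Proof. by apply: (addIr 1); rewrite subrK /rbeta natr1 prednK //; lia. Qed.

Lemma natZ_m2 : (m%:R : rootI2 m) *+ 2 = 0.
Proof. by rewrite mulr2n -natrD addnn -(Zp_nat_mod m2_gt1) modnn. Qed.

Lemma sword_eval j r :
  sword (ralpha m) (rbeta m) j r = (-1) ^+ j * r + ((odd j)%:R * (m%:R - 1) + j%:R)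
  /\ sword (rbeta m) (ralpha m) j r = (-1) ^+ j * r + ((odd j)%:R * (m%:R - 1) - j%:R).
Proof.
elim: j => [|j [IHab IHba]]; first by rewrite /sword /= perm1 expr0 mul1r mul0r subr0 !addr0.
rewrite !swordS /wcomp !permM IHab IHba !permE /refl_fun rbetaE /ralpha -natr1 exprS /=.
case: (odd j) => /=; split; try ring.
all: by rewrite -[RHS]addr0 -natZ_m2; ring.
Qed.

Lemma affine_perm_eq (P P' : {perm rootI2 m}) j k c d :
  (forall r, P r = (-1) ^+ j * r + c) -> (forall r, P' r = (-1) ^+ k * r + d) ->
  P = P' -> odd j = odd k /\ c = d.
Proof.
move=> EP EP' PP'.
have cd : c = d by move: (EP 0) (EP' 0); rewrite PP' !mulr0 !add0r => -> .
split=> //; apply: sign_odd_inj; apply: (addIr c).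
by move: (EP 1) (EP' 1); rewrite PP' cd !mulr1 => -> .
Qed.

Definition words_distinct (a b : rootI2 m) : Prop :=
  forall j k, (j <= m)%N -> (k <= m)%N ->
    (sword a b j = sword a b k -> j = k) /\
    (sword a b j = sword b a k -> j = k /\ (j = 0 \/ j = m)%N).

Lemma simple_words_distinct :
  words_distinct (ralpha m) (rbeta m) /\ words_distinct (rbeta m) (ralpha m).
Proof.
have evab j r := proj1 (sword_eval j r); have evba j r := proj2 (sword_eval j r).
split=> j k jm km; split.
- case/(affine_perm_eq (evab j) (evab k)) => -> /addrI; exact: natZ_inj.
- case/(affine_perm_eq (evab j) (evba k)) => -> /addrI; exact: natZ_oppr_inj.
- case/(affine_perm_eq (evba j) (evba k)) => -> /addrI /oppr_inj; exact: natZ_inj.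
- case/(affine_perm_eq (evba j) (evab k)) => -> /addrI E.
  by apply: natZ_oppr_inj; rewrite // -E opprK.
Qed.

End RootIndices.

Lemma sum_delta (T : finType) (R : pzSemiRingType) (c : T) (F : T -> R) :
  \sum_u (u == c)%:R * F u = F c.
Proof. by rewrite (bigD1 c) //= eqxx mul1r big1 ?addr0 // => u /negbTE ->; rewrite mul0r. Qed.

Section DemazureProducts.
Variables (m : nat) (Q : comUnitRingType) (act : {perm rootI2 m} -> {rmorphism Q -> Q})
  (x : rootI2 m -> Q).
Hypothesis act1 : forall q, act 1%g q = q.
Implicit Types (a b : rootI2 m) (w : {perm rootI2 m}).

Local Notation X := (Xword act x).

Lemma Xop_mulE (k : rootI2 m) (C : QW m Q) w :
  qw_mul act (Xop x k) C w = yr x k * (C w - act (sref k) (C (wcomp (sref k) w))).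
Proof.
rewrite /qw_mul ffunE.
transitivity (\sum_u Xop x k u * act u (C (w * u^-1)%g)).
  apply: eq_bigr => u _; rewrite (big_pred1 (w * u^-1)%g) // => v.
  by rewrite /wcomp /= (canF_eq (mulgK u)).
under eq_bigr => u _ do rewrite /Xop /qw_scale /qw_add /qw_opp /qw_delta !ffunE -mulrA mulrBl.
by rewrite -mulr_sumr sumrB !sum_delta invg1 mulg1 act1 sref_invg.
Qed.

Lemma Xword_rec a b n w :
  X a b n.+1 w = yr x a * (X b a n w - act (sref a) (X b a n (wcomp (sref a) w))).
Proof. by rewrite /Xword altwS -/(Xword _ _ _ _ _) Xop_mulE. Qed.

Lemma Xword_supp n : forall a b w,
  (forall k, (k <= n)%N -> w != sword a b k) ->
  (forall k, (k < n)%N -> w != sword b a k) -> X a b n w = 0.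
Proof.
elim: n => [|n IH] a b w wab wba.
  by rewrite /Xword /= /qw_delta ffunE (negbTE (wab 0%N isT)).
rewrite Xword_rec !IH ?raddf0 ?addr0 ?mulr0 //.
- move=> k kn; apply: contra (wab k.+1 kn) => /eqP E.
  by rewrite swordS -E srefK.
- move=> [|k] kn.
    by apply: contra (wab 1%N isT) => /eqP E; rewrite swordS -(srefK a w) E.
  have kn' : (k < n.+1)%N by lia.
  by apply: contra (wba k kn') => /eqP E; rewrite -(srefK a w) E swordS srefK.
- by move=> k kn; apply: wab; lia.
Qed.

Lemma Xword_vanish a b n j : words_distinct a b -> (n <= j <= m)%N ->
  (n < j)%N || (0 < j < m)%N -> X b a n (sword a b j) = 0.
Proof.
move=> dist /andP[nj jm] jcond; apply: Xword_supp => k kn; apply/eqP => E.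
  by have [_ /(_ E) [jk]] := dist j k jm (leq_trans kn (leq_trans nj jm)); lia.
by have [/(_ E) jk _] := dist j k jm (leq_trans (ltnW kn) (leq_trans nj jm)); lia.
Qed.

End DemazureProducts.

Definition dihedral_pair m (a b : rootI2 m) : Prop :=
  [/\ sref a \in Wgrp m, sref b \in Wgrp m, words_distinct a b & words_distinct b a].

Lemma dihedral_pairC m (a b : rootI2 m) : dihedral_pair a b -> dihedral_pair b a.
Proof. by case. Qed.

Lemma simple_dihedral_pair m : (1 < m)%N -> dihedral_pair (ralpha m) (rbeta m).
Proof.
move=> m_gt1; have [dab dba] := simple_words_distinct m_gt1.
by split=> //; apply: mem_gen; rewrite !inE eqxx ?orbT.
Qed.

(* Alternating words in reflections of W lie in W, so actM applies to them. *)
Lemma sword_in_W m (a b : rootI2 m) n :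
  sref a \in Wgrp m -> sref b \in Wgrp m -> sword a b n \in Wgrp m.
Proof.
elim: n a b => [|n IH] a b Ha Hb; first by rewrite /sword /= group1.
by rewrite swordS /wcomp groupM ?IH.
Qed.

Section Coefficients.
Variables (m : nat) (Q : comUnitRingType) (act : {perm rootI2 m} -> {rmorphism Q -> Q})
  (x : rootI2 m -> Q).
Hypothesis act1 : forall q, act 1%g q = q.
Hypothesis actM : forall u v, u \in Wgrp m -> v \in Wgrp m ->
  forall q, act (wcomp u v) q = act u (act v q).
Implicit Types (a b : rootI2 m) (q u : Q).

Local Notation X := (Xword act x).
Local Notation y := (yr x).

(* The product prod_{j<n} s^{(j)}_{a..}(y_{omega_j}); for n = m - i this is
   the paper's upsilon^{(i)}. *)
Definition yprod a b n : Q :=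
  \prod_(0 <= j < n) act (sword a b j) (y (if odd j then b else a)).

Lemma act_swordS a b n q : dihedral_pair a b ->
  act (sword a b n.+1) q = act (sref a) (act (sword b a n) q).
Proof. by case=> Ha Hb _ _; rewrite swordS actM ?sword_in_W. Qed.

Lemma act_srefK a q : sref a \in Wgrp m -> act (sref a) (act (sref a) q) = q.
Proof. by move=> Ha; rewrite -actM // sref_invol act1. Qed.

Lemma yprodS a b n : dihedral_pair a b -> yprod a b n.+1 = y a * act (sref a) (yprod b a n).
Proof.
move=> ab; rewrite /yprod big_nat_recl // rmorph_prod /= act1.
by congr (_ * _); apply: eq_bigr => j _; rewrite act_swordS //; case: (odd j).
Qed.

Lemma SsumS a b n u : dihedral_pair a b ->
  Ssum act a b 0 n.+1 u = u + act (sref a) (Ssum act b a 0 n u).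
Proof.
move=> ab; rewrite /Ssum big_nat_recl // rmorph_sum /= act1.
by congr (_ + _); apply: eq_bigr => j _; rewrite act_swordS.
Qed.

Lemma act_sign a k : act (sref a) ((-1) ^+ k) = (-1) ^+ k.
Proof. by rewrite rmorphXn rmorphN rmorph1. Qed.

Lemma coef_longer_word a b n : dihedral_pair a b -> (n < m)%N ->
  X b a n (sword a b n.+1) = 0.
Proof. by case=> _ _ ab _ nm; apply: Xword_vanish; rewrite ?leqnSn ?ltnSn. Qed.

Lemma coef_top n : forall a b, dihedral_pair a b -> (n <= m)%N ->
  X a b n (sword a b n) = (-1) ^+ n * yprod a b n.
Proof.
elim: n => [|n IH] a b ab nm.
  by rewrite /Xword /= /qw_delta ffunE /sword /= /yprod big_geq // eqxx mulr1.
have ba := dihedral_pairC ab.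
rewrite (Xword_rec x act1) {2}swordS srefK coef_longer_word // IH 1?ltnW //.
by rewrite yprodS // rmorphM act_sign exprS; ring.
Qed.

Lemma coef_next a b n : dihedral_pair a b -> (n < m)%N ->
  X a b n.+1 (sword b a n) = y a * ((-1) ^+ n * yprod b a n).
Proof.
move=> ab nm; have ba := dihedral_pairC ab; have nm' := ltnW nm.
rewrite (Xword_rec x act1) -swordS coef_longer_word // coef_top //.
by rewrite raddf0 subr0.
Qed.

Lemma coef_second n : forall a b, dihedral_pair a b -> (n.+1 < m)%N ->
  X a b n.+2 (sword a b n) =
    (-1) ^+ n * (yprod a b n * Ssum act a b 0 n (y a * y b)).
Proof.
elim: n => [|n IH] a b ab nm; have ba := dihedral_pairC ab.
  have vanish : X b a 1 (sword a b 1) = 0.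
    by case: ab => _ _ dab _; apply: Xword_vanish => //=; lia.
  have m_gt0 := ltnW nm.
  rewrite (Xword_rec x act1) -[wcomp _ _]/(sword a b 1) vanish coef_next //.
  by rewrite /yprod /Ssum big_nat1 !big_geq // act1 raddf0 subr0; ring.
have nm' := ltnW nm.
rewrite (Xword_rec x act1) {2}swordS srefK coef_next // IH //.
rewrite yprodS // SsumS // [y b * y a]mulrC !rmorphM act_sign !exprS; ring.
Qed.

Lemma coef_third a b n : dihedral_pair a b -> (n.+3 <= m)%N ->
  X a b n.+3 (sword b a n) = (-1) ^+ n *
    (y a * yprod b a n * (Ssum act b a 0 n (y a * y b) + act (sref a) (y a * y b))).
Proof.
move=> ab nm; have ba := dihedral_pairC ab; have [Ha _ _ _] := ab.
have nm' : (n.+1 < m)%N by rewrite ltnW.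
rewrite (Xword_rec x act1) -swordS coef_second // coef_next //.
rewrite yprodS // [y b * y a]mulrC !rmorphM !act_sign act_srefK // !exprS; ring.
Qed.

End Coefficients.

Lemma sign_sub3 (R : pzRingType) m (z : R) : (3 <= m)%N ->
  (-1) ^+ (m - 3) * z = if ~~ odd m then - z else z.
Proof. by move=> m_ge3; rewrite -signr_odd oddB //=; case: (odd m); rewrite /= ?mulN1r ?mul1r. Qed.

Unset Implicit Arguments.

Theorem lemma6p4 (m : nat) (hm : (3 <= m)%N) (Q : comUnitRingType)
    (act : {perm rootI2 m} -> {rmorphism Q -> Q}) (x : rootI2 m -> Q)
    (act1 : forall q, act 1%g q = q)
    (actM : forall u v, u \in Wgrp m -> v \in Wgrp m ->
              forall q, act (wcomp u v) q = act u (act v q))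
    (actx : forall w, w \in Wgrp m -> forall k, act w (x k) = x (w k))
    (xunit : forall k, x k \is a GRing.unit) :
  let a := ralpha m in
  let b := rbeta m in
  let y := yr x in
  qw_coef (Xword act x a b m) (sword b a (m - 3)) =
    (if ~~ odd m
     then - (y a * ups act x b a 3 *
               (Ssum act b a 0 (m - 3) (y a * y b) + act (sref a) (y a * y b)))
     else    y a * ups act x b a 3 *
               (Ssum act b a 0 (m - 3) (y a * y b) + act (sref a) (y a * y b)))
  /\
  qw_coef (Xword act x b a m) (sword a b (m - 3)) =
    (if ~~ odd m
     then - (y b * ups act x a b 3 *
               (Ssum act a b 0 (m - 3) (y b * y a) + act (sref b) (y b * y a)))
     else    y b * ups act x a b 3 *
               (Ssum act a b 0 (m - 3) (y b * y a) + act (sref b) (y b * y a))).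
Proof.
move=> a b y.
have ab : dihedral_pair a b by apply: simple_dihedral_pair; lia.
have m_eq : (m - 3).+3 = m by lia.
have m3_le : ((m - 3).+3 <= m)%N by rewrite m_eq.
split; rewrite -sign_sub3 //.
  by have := coef_third x act1 actM ab m3_le; rewrite m_eq.
by have := coef_third x act1 actM (dihedral_pairC ab) m3_le; rewrite m_eq.
Qed.
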